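(* Let $R$ be an integral domain; if $R=\bigoplus_{i\ge0}[R]_i$ is graded, assume $[R]_1\neq0$. Let $A=\begin{pmatrix}a&\mathfrak b\\ \mathfrak c&A'\end{pmatrix}\in R^{n,n}$ with $a\in R$, $\mathfrak b$ a row vector and $\mathfrak c$ a column vector in $R^{n-1}$, and $A'\in R^{n-1,n-1}$. If $\det A$, $\det A'$, $\mathfrak b$ and $\mathfrak c$ are all non-zero, then $A$ is linked to a block diagonal matrix $\begin{pmatrix}b&0\\0&B'\end{pmatrix}$ with $b\in R$, $B'\in R^{n-1,n-1}$. If $R$ is graded and $A$ is homogeneous, this block diagonal matrix can be taken homogeneous.
   Context: $R^{n,n}$ denotes the $n\times n$ matrices over $R$ and $B^t$ the transpose. Two matrices are equivalent if one equals $PAQ$ with $P,Q$ invertible. Matrices $A,B\in R^{n,n}$ are linked in one step if $A\cdot B^t$ is equivalent to a symmetric matrix whose determinant is a non-zero divisor of $R$; $A,B$ are linked if there is a chain $A=A_0,A_1,\dots,A_v=B$ with $A_i$ linked in one step to $A_{i+1}$ for all $i$, where in the graded case all $A_i$ are required to be homogeneous, i.e. to represent degree-preserving homomorphisms between graded free $R$-modules. *)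

From mathcomp Require Import all_boot all_order all_algebra.
Set Implicit Arguments. Unset Strict Implicit. Unset Printing Implicit Defensive.
Import GRing.Theory Num.Theory.
Local Open Scope ring_scope.

Definition nonzerodivisor (R : comPzRingType) (x : R) : Prop :=
  forall y : R, y * x = 0 -> y = 0.

Definition mx_equiv (R : comUnitRingType) (m : nat) (A B : 'M[R]_m) : Prop :=
  exists P Q : 'M[R]_m, [/\ P \in unitmx, Q \in unitmx & B = P *m A *m Q].

Definition linked1 (R : comUnitRingType) (m : nat) (A B : 'M[R]_m) : Prop :=
  exists S : 'M[R]_m, [/\ S^T = S, nonzerodivisor (\det S) & mx_equiv (A *m B^T) S].

(* Chains A = A_0, ..., A_v = B of one-step links, all A_i satisfying P
   (P = always True in the ungraded case, P = homogeneity in the graded case). *)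
Inductive linked_in (R : comUnitRingType) (m : nat) (P : 'M[R]_m -> Prop)
  : 'M[R]_m -> 'M[R]_m -> Prop :=
| linked_refl A : P A -> linked_in P A A
| linked_step A A1 B : P A -> linked1 A A1 -> linked_in P A1 B -> linked_in P A B.

Definition linked (R : comUnitRingType) (m : nat) (A B : 'M[R]_m) : Prop :=
  linked_in (fun _ => True) A B.

(* G i = the i-th homogeneous component [R]_i of a grading R = (+)_{i>=0} [R]_i. *)
Definition is_grading (R : comPzRingType) (G : nat -> R -> Prop) : Prop :=
  [/\ (forall i, G i 0),
      (forall i x y, G i x -> G i y -> G i (x - y)),
      (forall i j x y, G i x -> G j y -> G (i + j)%N (x * y)),
      (forall x : R, exists (N : nat) (f : nat -> R),
          (forall i, G i (f i)) /\ x = \sum_(i < N) f i)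
    & (forall (N : nat) (f : nat -> R), (forall i, G i (f i)) ->
          \sum_(i < N) f i = 0 -> forall i, (i < N)%N -> f i = 0)].

(* A homogeneous matrix: it represents a degree-preserving homomorphism
   (+)_j R(-e_j) -> (+)_i R(-d_i), i.e. each entry A i j is 0 or homogeneous
   of degree e_j - d_i. *)
Definition homogeneous_mx (R : comPzRingType) (G : nat -> R -> Prop) (m : nat)
  (A : 'M[R]_m) : Prop :=
  exists d e : 'I_m -> int, forall i j,
    A i j = 0 \/ exists k : nat, (e j - d i = k%:Z)%R /\ G k (A i j).

From mathcomp Require Import all_boot all_order all_algebra.
From mathcomp Require Import perm zify.
Set Implicit Arguments. Unset Strict Implicit. Unset Printing Implicit Defensive.
Import GRing.Theory Num.Theory.
Local Open Scope ring_scope.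

(* A matrix A with non-zero-divisor determinant is linked in one step to
   (adj A)^T, since A adj A = det A; and (adj A)^T is linked in one step to
   P X A for any invertible P and symmetric non-singular X, since
   (adj A)^T (P X A)^T = det A X P^T.  Two such double steps, with
   P = [1 -b adj A'; 0 1], X = diag(det A', 1) and then
   P = [1 0; -c 1], X = diag(1, det A), where det A' a - b adj A' c = det A,
   reduce A = [a b; c A'] first to [det A 0; c A'] and then to
   [det A 0; 0 det A A'].  All intermediate matrices are homogeneous when A
   is, because adjugates and determinants of homogeneous matrices are. *)

Lemma nonzerodivisorM (R : comPzRingType) (x y : R) :
  nonzerodivisor x -> nonzerodivisor y -> nonzerodivisor (x * y).
Proof. by move=> nx ny z; rewrite mulrA => /ny /nx. Qed.

Lemma nonzerodivisorX (R : comPzRingType) (x : R) k :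
  nonzerodivisor x -> nonzerodivisor (x ^+ k).
Proof.
move=> nx; elim: k => [|k IHk]; first by move=> z; rewrite expr0 mulr1.
by rewrite exprS; apply: nonzerodivisorM.
Qed.

Lemma unit_nonzerodivisor (R : comUnitRingType) (u : R) :
  u \is a GRing.unit -> nonzerodivisor u.
Proof. by move=> uu z zu0; rewrite -(mulrK uu z) zu0 mul0r. Qed.

Lemma neq0_nonzerodivisor (R : idomainType) (x : R) : x != 0 -> nonzerodivisor x.
Proof. by move=> nx y /eqP; rewrite mulf_eq0 (negPf nx) orbF => /eqP. Qed.

Section AdjugateLinks.
Variables (R : comUnitRingType) (n : nat).

Lemma linked1_adj (A : 'M[R]_n) : nonzerodivisor (\det A) -> linked1 A (\adj A)^T.
Proof.
move=> nA; exists (\det A)%:M; split; first exact: tr_scalar_mx.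
  by rewrite det_scalar; apply: nonzerodivisorX.
exists 1%:M, 1%:M; split; rewrite ?unitmx1 //.
by rewrite trmxK mul_mx_adj mul1mx mulmx1.
Qed.

Lemma linked1_adj_mul (A P X : 'M[R]_n) :
  nonzerodivisor (\det A) -> P \in unitmx -> X^T = X -> nonzerodivisor (\det X) ->
  linked1 (\adj A)^T (P *m X *m A).
Proof.
move=> nA uP sX nX; have nP := unit_nonzerodivisor uP.
exists (\det A *: (P *m X *m P^T)); split.
- by rewrite linearZ /= !trmx_mul trmxK sX mulmxA.
- rewrite detZ !det_mulmx det_tr.
  by do 3?apply: nonzerodivisorM => //; apply: nonzerodivisorX.
- exists P, 1%:M; split; rewrite ?unitmx1 //.
  rewrite mulmx1 !trmx_mul sX (mulmxA (\adj A)^T) -trmx_mul mul_mx_adj.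
  by rewrite tr_scalar_mx mul_scalar_mx -scalemxAr mulmxA.
Qed.

Lemma linked_in_adj_mul (Pr : 'M[R]_n -> Prop) (A P X B : 'M[R]_n) :
  nonzerodivisor (\det A) -> P \in unitmx -> X^T = X -> nonzerodivisor (\det X) ->
  Pr A -> Pr (\adj A)^T -> linked_in Pr (P *m X *m A) B -> linked_in Pr A B.
Proof.
move=> nA uP sX nX PrA PrA' PXA_B.
apply: (linked_step PrA (linked1_adj nA)).
exact: linked_step PrA' (linked1_adj_mul nA uP sX nX) PXA_B.
Qed.

End AdjugateLinks.

Section BlockReduction.
Variables (R : comPzRingType) (m n : nat).

Lemma mul_block_clear_row (a : 'M[R]_m) b c (A' : 'M_n) :
  block_mx 1%:M (- (b *m \adj A')) 0 1%:M *m block_mx (\det A')%:M 0 0 1%:M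
    *m block_mx a b c A'
  = block_mx (\det A' *: a - b *m \adj A' *m c) 0 c A'.
Proof.
rewrite !mulmx_block !(mulmx0, mul0mx, mulmx1, mul1mx, addr0, add0r).
by rewrite !mulNmx -[b *m _ *m A']mulmxA mul_adj_mx mul_mx_scalar !mul_scalar_mx subrr.
Qed.

Lemma mul_block_clear_col (s : R) (c : 'M_(n, m)) (A' : 'M_n) :
  block_mx 1%:M 0 (- c) 1%:M *m block_mx 1%:M 0 0 s%:M *m block_mx s%:M 0 c A'
  = block_mx s%:M 0 0 (s *: A').
Proof.
rewrite !mulmx_block !(mulmx0, mul0mx, mulmx1, mul1mx, addr0, add0r).
by rewrite mulNmx mul_mx_scalar mul_scalar_mx addNr mul_scalar_mx.
Qed.

End BlockReduction.

Section CornerReduction.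
Variables (R : idomainType) (n : nat) (a : R) (b : 'rV[R]_n) (c : 'cV[R]_n).
Variable A' : 'M[R]_n.
Local Notation A := (block_mx (a%:M : 'M_1) b c A').
Local Notation s := (\det A).
Hypotheses (dA : s != 0) (dA' : \det A' != 0).

Lemma block1_schur_complement : \det A' *: a%:M - b *m \adj A' *m c = s%:M.
Proof.
set S := _ - _; have := congr1 determinant (mul_block_clear_row a%:M b c A').
rewrite !det_mulmx !det_ublock !det1 det_scalar1 !mul1r mulr1 det_lblock mulrC.
by move/(mulIf dA') => detS; rewrite [LHS]mx11_scalar -det_mx11 detS.
Qed.

Lemma linked_in_block1_diag (Pr : 'M[R]_(1 + n) -> Prop) :
  let D1 := block_mx (s%:M : 'M_1) 0 c A' in
  Pr A -> Pr (\adj A)^T -> Pr D1 -> Pr (\adj D1)^T ->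
  Pr (block_mx (s%:M : 'M_1) 0 0 (s *: A')) ->
  linked_in Pr A (block_mx (s%:M : 'M_1) 0 0 (s *: A')).
Proof.
move=> D1 PrA PrA' PrD1 PrD1' PrD.
have diag_sym (x y : R) :
  (block_mx (x%:M : 'M_1) 0 0 (y%:M : 'M_n))^T = block_mx x%:M 0 0 y%:M.
  by rewrite tr_block_mx !trmx0 !tr_scalar_mx.
have unit_row : block_mx (1%:M : 'M_1) (- (b *m \adj A')) 0 1%:M \in unitmx.
  by rewrite unitmxE det_ublock !det1 mulr1 unitr1.
have unit_col : block_mx (1%:M : 'M_1) 0 (- c) 1%:M \in unitmx.
  by rewrite unitmxE det_lblock !det1 mulr1 unitr1.
apply: (linked_in_adj_mul _ unit_row (diag_sym (\det A') 1) _ PrA PrA').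
- exact: neq0_nonzerodivisor.
- by apply: neq0_nonzerodivisor; rewrite det_ublock det_scalar1 det1 mulr1.
rewrite mul_block_clear_row block1_schur_complement.
apply: (linked_in_adj_mul _ unit_col (diag_sym 1 s) _ PrD1 PrD1').
- by apply: neq0_nonzerodivisor; rewrite det_lblock det_scalar1 mulf_neq0.
- by apply: neq0_nonzerodivisor; rewrite det_ublock det1 det_scalar mul1r expf_neq0.
by rewrite mul_block_clear_col; apply: linked_refl.
Qed.

End CornerReduction.

Section Homogeneity.
Variables (R : comPzRingType) (G : nat -> R -> Prop).
Hypothesis HG : is_grading G.

Definition homogeneous (dg : int) (x : R) : Prop :=
  x = 0 \/ exists k : nat, dg = k%:Z /\ G k x.

Lemma gradingN k x : G k x -> G k (- x).
Proof. by have [G0 GB _ _ _] := HG; rewrite -sub0r; apply: GB. Qed.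

Lemma homogeneous0 dg : homogeneous dg 0.
Proof. by left. Qed.

Lemma homogeneousN dg x : homogeneous dg x -> homogeneous dg (- x).
Proof.
case=> [->|[k [-> Gx]]]; first by rewrite oppr0; left.
by right; exists k; split; last exact: gradingN.
Qed.

Lemma homogeneousD dg x y :
  homogeneous dg x -> homogeneous dg y -> homogeneous dg (x + y).
Proof.
have [_ GB _ _ _] := HG.
case=> [->|[k [-> Gx]]]; first by rewrite add0r.
case=> [->|[l [[kl] Gy]]]; first by rewrite addr0; right; exists k.
right; exists k; split => //; rewrite -[y]opprK; apply: GB => //.
by rewrite kl; apply: gradingN.
Qed.

Lemma homogeneousM dx dy x y :
  homogeneous dx x -> homogeneous dy y -> homogeneous (dx + dy) (x * y).
Proof.
have [_ _ GM _ _] := HG.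
case=> [->|[k [-> Gx]]]; first by rewrite mul0r; left.
case=> [->|[l [-> Gy]]]; first by rewrite mulr0; left.
by right; exists (k + l)%N; split; [rewrite PoszD | apply: GM].
Qed.

Lemma homogeneous_sign dg (e : nat) x :
  homogeneous dg x -> homogeneous dg ((-1) ^+ e * x).
Proof.
move=> hx; rewrite -signr_odd; case: (odd e); rewrite ?mulN1r ?mul1r //.
exact: homogeneousN.
Qed.

Lemma homogeneous_prod n (F : 'I_n.+1 -> R) (dg : 'I_n.+1 -> int) :
  (forall i, homogeneous (dg i) (F i)) -> homogeneous (\sum_i dg i) (\prod_i F i).
Proof.
elim: n F dg => [|n IHn] F dg hF; first by rewrite !big_ord1.
rewrite big_ord_recl [\prod_i _]big_ord_recl.
by apply: homogeneousM => //; apply: IHn.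
Qed.

Lemma homogeneous_det n (M : 'M[R]_n.+1) (d e : 'I_n.+1 -> int) :
  (forall i j, homogeneous (e j - d i) (M i j)) ->
  homogeneous (\sum_i e i - \sum_i d i) (\det M).
Proof.
move=> hM; apply: (big_ind (homogeneous _)) => [|x y|s _].
- exact: homogeneous0.
- exact: homogeneousD.
rewrite (reindex_inj (@perm_inj _ s)) /= -sumrB.
by apply/homogeneous_sign/homogeneous_prod.
Qed.

Lemma homogeneous_adj_tr n (M : 'M[R]_n.+2) :
  homogeneous_mx G M -> homogeneous_mx G (\adj M)^T.
Proof.
move=> [d [e hM]].
exists (fun i => - d i), (fun j => (\sum_i e i - \sum_i d i) - e j) => i j.
rewrite !mxE /cofactor; apply: homogeneous_sign.
have := @homogeneous_det _ (row' i (col' j M)) (d \o lift i) (e \o lift j).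
rewrite (bigD1_ord j (P := xpredT) (F := e)) // (bigD1_ord i (P := xpredT) (F := d)) //=.
have -> : forall p q x y : int, p + x - (q + y) - p - - q = x - y by move=> *; lia.
by apply=> k l; rewrite !mxE; apply: hM.
Qed.

Lemma homogeneous_block1 n (x : R) (b : 'rV[R]_n) (c : 'cV[R]_n) (A' : 'M[R]_n)
    (d0 e0 : int) (d e : 'I_n -> int) :
  homogeneous (e0 - d0) x -> (forall l, homogeneous (e l - d0) (b 0 l)) ->
  (forall k, homogeneous (e0 - d k) (c k 0)) ->
  (forall k l, homogeneous (e l - d k) (A' k l)) ->
  homogeneous_mx G (block_mx (x%:M : 'M_1) b c A').
Proof.
move=> hx hb hc hA'.
exists (fun i => if split i is inr k then d k else d0).
exists (fun j => if split j is inr l then e l else e0).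
move=> i j; case: (split_ordP i) => k ->; case: (split_ordP j) => l ->.
- by rewrite block_mxEul !ord1 mxE mulr1n.
- by rewrite block_mxEur [k]ord1; apply: hb.
- by rewrite block_mxEdl [l]ord1; apply: hc.
- by rewrite block_mxEdr; apply: hA'.
Qed.

Lemma homogeneous_block1_reducts n (a : R) b c (A' : 'M[R]_n) :
  let s := \det (block_mx (a%:M : 'M_1) b c A') in s != 0 ->
  homogeneous_mx G (block_mx (a%:M : 'M_1) b c A') ->
  homogeneous_mx G (block_mx (s%:M : 'M_1) 0 c A') /\
  homogeneous_mx G (block_mx (s%:M : 'M_1) 0 0 (s *: A')).
Proof.
move=> s s_neq0 [d [e hA]].
have [s0|[K [degK Gs]]] := homogeneous_det hA; first by move: s_neq0; rewrite /s s0 eqxx.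
pose d' k := d (rshift 1 k); pose e' l := e (rshift 1 l); pose e0 := e (lshift n ord0).
have hc k : homogeneous (e0 - d' k) (c k 0).
  by have := hA (rshift 1 k) (lshift n ord0); rewrite block_mxEdl.
have hA' k l : homogeneous (e' l - d' k) (A' k l).
  by have := hA (rshift 1 k) (rshift 1 l); rewrite block_mxEdr.
have hs dg : dg = K%:Z -> homogeneous dg s by move=> ->; right; exists K.
have row0 dg l : homogeneous dg ((0 : 'rV[R]_n) 0 l) by rewrite mxE; left.
have col0 dg k : homogeneous dg ((0 : 'cV[R]_n) k 0) by rewrite mxE; left.
split.
- apply: (homogeneous_block1 (d0 := e0 - K%:Z) (e0 := e0) (d := d') (e := e')).
  + by apply: hs; lia.
  + by move=> l; apply: row0.
  + exact: hc.
  + exact: hA'.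
- apply: (homogeneous_block1 (d0 := 0) (e0 := K%:Z) (d := d') (e := fun l => e' l + K%:Z)).
  + by apply: hs; lia.
  + by move=> l; apply: row0.
  + by move=> k; apply: col0.
  + move=> k l; rewrite mxE (_ : _ - _ = K%:Z + (e' l - d' k)); last by lia.
    by apply: homogeneousM => //; apply: hs.
Qed.

End Homogeneity.

Theorem lemma7p6 (R : idomainType) (n' : nat) (a : R) (b : 'rV[R]_n')
  (c : 'cV[R]_n') (A' : 'M[R]_n') :
  \det (block_mx (a%:M : 'M_1) b c A') != 0 -> \det A' != 0 -> b != 0 -> c != 0 ->
  (exists (b0 : R) (B' : 'M[R]_n'),
      linked (block_mx (a%:M : 'M_1) b c A') (block_mx (b0%:M : 'M_1) 0 0 B'))
  /\
  (forall G : nat -> R -> Prop, is_grading G -> (exists x, G 1%N x /\ x != 0) ->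
     homogeneous_mx G (block_mx (a%:M : 'M_1) b c A') ->
     exists (b0 : R) (B' : 'M[R]_n'),
       homogeneous_mx G (block_mx (b0%:M : 'M_1) 0 0 B') /\
       linked_in (@homogeneous_mx R G (1 + n')%N) (block_mx (a%:M : 'M_1) b c A') (block_mx (b0%:M : 'M_1) 0 0 B')).
Proof.
case: n' a b c A' => [|n] a b c A' dA dA' b_neq0 _.
  by rewrite thinmx0 eqxx in b_neq0.
set s := \det _ in dA *; split.
  by exists s, (s *: A'); apply: linked_in_block1_diag.
move=> G HG _ hA; have [hD1 hD] := homogeneous_block1_reducts HG dA hA.
exists s, (s *: A'); split => //.
by apply: linked_in_block1_diag => //; apply: homogeneous_adj_tr.
Qed.
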